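(* Let $\boldsymbol{M}$ be a log-convex sequence. Then: (i) $\boldsymbol{M}_{+1}\subset\widetilde{\boldsymbol{M}}$. (ii) The following statements are equivalent: (1) $\boldsymbol{M}$ satisfies $\operatorname{(sm)}$; (2) $\boldsymbol{M}_{+1}$ satisfies $\operatorname{(sm)}$; (3) $\boldsymbol{M}_{+1}\approx\widetilde{\boldsymbol{M}}$; (4) $\widetilde{\boldsymbol{M}}$ satisfies $\operatorname{(sm)}$.
   Context: $\boldsymbol{M}=(M_p)_{p\in\mathbb{N}_0}$ is a sequence of positive reals with $M_0=1$, with quotients $m_p=M_{p+1}/M_p$; log-convex means $M_p^2\le M_{p-1}M_{p+1}$ for $p\ge1$ (equivalently $(m_p)$ nondecreasing). $\boldsymbol{M}_{+1}=(M_{p+1})_p$ and $\widetilde{\boldsymbol{M}}=(\widetilde M_p)_p$ with $\widetilde M_p=M_{p+1}\log(e^2m_{p+1}/m_p)$. For any sequence $\boldsymbol{N}$ with quotients $n_p=N_{p+1}/N_p$, $\operatorname{(sm)}$ means there are $C_0>0$, $H>1$ with $\log(n_{p+1}/n_p)\le C_0H^{p+1}$ for all $p\in\mathbb{N}_0$. $\boldsymbol{N}\subset\boldsymbol{P}$ means there are $C,h>0$ with $N_p\le Ch^pP_p$ for all $p$; $\boldsymbol{N}\approx\boldsymbol{P}$ means $\boldsymbol{N}\subset\boldsymbol{P}$ and $\boldsymbol{P}\subset\boldsymbol{N}$. *)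

From Stdlib Require Import Reals.
Open Scope R_scope.

Definition quot (M : nat -> R) (p : nat) : R := M (S p) / M p.

Definition is_weight_seq (M : nat -> R) : Prop :=
  M 0%nat = 1 /\ forall p, 0 < M p.

Definition log_convex (M : nat -> R) : Prop :=
  forall p : nat, (1 <= p)%nat -> (M p)^2 <= M (p - 1)%nat * M (S p).

Definition shift1 (M : nat -> R) : nat -> R := fun p => M (S p).

Definition Mtilde (M : nat -> R) : nat -> R :=
  fun p => M (S p) * ln (exp 2 * quot M (S p) / quot M p).

Definition sm (N : nat -> R) : Prop :=
  exists C0 H : R, 0 < C0 /\ 1 < H /\
    forall p : nat, ln (quot N (S p) / quot N p) <= C0 * H ^ (S p).

Definition seq_incl (N P : nat -> R) : Prop :=
  exists C h : R, 0 < C /\ 0 < h /\ forall p : nat, N p <= C * h ^ p * P p.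

Definition seq_equiv (N P : nat -> R) : Prop := seq_incl N P /\ seq_incl P N.

(* By log-convexity the quotients m_p increase, so b_p := log(m_{p+1}/m_p) >= 0, and
   Mtilde_p = M_{p+1} (2 + b_p).  Hence M_{+1} <= Mtilde trivially, while Mtilde <= C h^p M_{+1}
   says exactly that b_p grows at most geometrically, which is (sm) for M.  Shifting the index
   does not affect geometric growth, so (sm) for M and M_{+1} agree.  Finally the (sm) quantity
   of Mtilde is b_{p+1} plus a second logarithmic difference of 2 + b, which lies between
   -b_{p+1}/2 - O(1) and b_p + b_{p+2} + O(1). *)
From Stdlib Require Import Reals Lra FunctionalExtensionality.
Open Scope R_scope.

Lemma ln_ge_0 x : 1 <= x -> 0 <= ln x.
Proof.
  intros Hx; destruct (Rle_lt_or_eq_dec _ _ Hx) as [Hlt | <-].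
  - rewrite <- ln_1; left; apply ln_increasing; lra.
  - rewrite ln_1; lra.
Qed.

Lemma ln_le_sub_1 x : 0 < x -> ln x <= x - 1.
Proof.
  intros Hx; pose proof (exp_ineq1_le (ln x)) as H; rewrite exp_ln in H; lra.
Qed.

Lemma ln_le_tangent c x : 0 < c -> 0 < x -> ln x <= x / c + ln c - 1.
Proof.
  intros Hc Hx.
  replace x with (x / c * c) at 1 by (field; lra).
  rewrite ln_mult by (try apply Rdiv_lt_0_compat; lra).
  pose proof (ln_le_sub_1 (x / c) ltac:(apply Rdiv_lt_0_compat; lra)); lra.
Qed.

Definition log_quot_ratio (N : nat -> R) (p : nat) : R := ln (quot N (S p) / quot N p).

Lemma log_quot_ratio_eq N p : (forall q, 0 < N q) ->
  log_quot_ratio N p = ln (N (S (S p))) - 2 * ln (N (S p)) + ln (N p).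
Proof.
  intros HN; pose proof (HN p); pose proof (HN (S p)); pose proof (HN (S (S p))).
  unfold log_quot_ratio, quot.
  replace (N (S (S p)) / N (S p) / (N (S p) / N p))
    with (N (S (S p)) * N p * / (N (S p) * N (S p))) by (field; lra).
  rewrite !ln_mult, ln_Rinv, ln_mult; try lra;
    repeat (apply Rmult_lt_0_compat || apply Rinv_0_lt_compat); assumption.
Qed.

Lemma log_quot_ratio_mul N a p : (forall q, 0 < N q) -> (forall q, 0 < a q) ->
  log_quot_ratio (fun q => N q * a q) p = log_quot_ratio N p + log_quot_ratio a p.
Proof.
  intros HN Ha.
  rewrite !log_quot_ratio_eq by (auto; intros q; apply Rmult_lt_0_compat; auto).
  rewrite !ln_mult by auto; ring.
Qed.

Lemma log_quot_ratio_shift1 N p : log_quot_ratio (shift1 N) p = log_quot_ratio N (S p).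
Proof. reflexivity. Qed.

Definition geom_bounded (b : nat -> R) : Prop :=
  exists C0 H : R, 0 < C0 /\ 1 < H /\ forall p : nat, b p <= C0 * H ^ S p.

Lemma sm_geom_bounded N : sm N <-> geom_bounded (log_quot_ratio N).
Proof. reflexivity. Qed.

Lemma geom_bounded_le b c : (forall p, b p <= c p) -> geom_bounded c -> geom_bounded b.
Proof.
  intros Hbc [C0 [H [HC [HH Hc]]]]; exists C0, H; repeat split; auto.
  intros p; apply (Rle_trans _ _ _ (Hbc p) (Hc p)).
Qed.

Lemma scaled_pow_le C C' H m n :
  0 <= C <= C' -> 1 <= H -> (m <= n)%nat -> C * H ^ m <= C' * H ^ n.
Proof.
  intros HC HH Hmn; apply Rmult_le_compat; try lra.
  - apply pow_le; lra.
  - apply Rle_pow; assumption.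
Qed.

Lemma geom_bounded_const x : geom_bounded (fun _ => x).
Proof.
  pose proof (Rabs_pos x); pose proof (Rle_abs x).
  exists (Rabs x + 1), 2; repeat split; try lra.
  intros p; pose proof (scaled_pow_le (Rabs x + 1) (Rabs x + 1) 2 0 (S p)
    ltac:(lra) ltac:(lra) ltac:(auto with arith)).
  simpl in *; lra.
Qed.

Lemma geom_bounded_add b c :
  geom_bounded b -> geom_bounded c -> geom_bounded (fun p => b p + c p).
Proof.
  intros [C1 [H1 [HC1 [HH1 Hb]]]] [C2 [H2 [HC2 [HH2 Hc]]]].
  pose proof (Rmax_l H1 H2); pose proof (Rmax_r H1 H2).
  exists (C1 + C2), (Rmax H1 H2); repeat split; try lra.
  intros p.
  assert (H1 ^ S p <= Rmax H1 H2 ^ S p) by (apply pow_incr; lra).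
  assert (H2 ^ S p <= Rmax H1 H2 ^ S p) by (apply pow_incr; lra).
  pose proof (Hb p); pose proof (Hc p); nra.
Qed.

Lemma geom_bounded_shift_iff b : geom_bounded (fun p => b (S p)) <-> geom_bounded b.
Proof.
  split.
  - intros [C0 [H [HC [HH Hb]]]].
    pose proof (Rabs_pos (b 0%nat)); pose proof (Rle_abs (b 0%nat)).
    exists (C0 + Rabs (b 0%nat)), H; repeat split; try lra.
    intros [|p].
    + pose proof (scaled_pow_le (Rabs (b 0%nat)) (C0 + Rabs (b 0%nat)) H 0 1
        ltac:(lra) ltac:(lra) ltac:(auto with arith)).
      simpl in *; lra.
    + pose proof (Hb p).
      pose proof (scaled_pow_le C0 (C0 + Rabs (b 0%nat)) H (S p) (S (S p))
        ltac:(lra) ltac:(lra) ltac:(auto with arith)).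
      lra.
  - intros [C0 [H [HC [HH Hb]]]]; exists (C0 * H), H; repeat split; try nra.
    intros p; specialize (Hb (S p)); simpl in *; lra.
Qed.

Lemma seq_incl_one_iff a : seq_incl a (fun _ => 1) <-> geom_bounded a.
Proof.
  split.
  - intros [C [h [HC [Hh Ha]]]]; exists C, (h + 1); repeat split; try lra.
    intros p; specialize (Ha p).
    assert (h ^ p <= (h + 1) ^ p) by (apply pow_incr; lra).
    pose proof (scaled_pow_le C C (h + 1) p (S p)
      ltac:(lra) ltac:(lra) ltac:(auto with arith)); nra.
  - intros [C0 [H [HC [HH Ha]]]]; exists (C0 * H), H; repeat split; try nra.
    intros p; specialize (Ha p); simpl in *; lra.
Qed.

Lemma seq_incl_mul_iff N a : (forall p, 0 < N p) ->
  seq_incl (fun p => N p * a p) N <-> seq_incl a (fun _ => 1).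
Proof.
  intros HN; split; intros [C [h [HC [Hh Hincl]]]]; exists C, h; repeat split; auto;
    intros p; specialize (Hincl p); pose proof (HN p).
  - apply (Rmult_le_reg_l (N p)); auto; lra.
  - rewrite Rmult_1_r in Hincl; nra.
Qed.

Lemma sm_shift1_iff N : sm (shift1 N) <-> sm N.
Proof. exact (geom_bounded_shift_iff (log_quot_ratio N)). Qed.

Section LogConvex.

Variable M : nat -> R.
Hypothesis M_weight : is_weight_seq M.
Hypothesis M_log_convex : log_convex M.

Lemma M_pos p : 0 < M p.
Proof. apply (proj2 M_weight). Qed.

Lemma quot_pos p : 0 < quot M p.
Proof. apply Rdiv_lt_0_compat; apply M_pos. Qed.

Lemma quot_le_quotS p : quot M p <= quot M (S p).
Proof.
  pose proof (M_log_convex (S p) ltac:(auto with arith)) as Hlc.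
  replace (S p - 1)%nat with p in Hlc by (simpl; auto with arith).
  pose proof (M_pos p); pose proof (M_pos (S p)); pose proof (M_pos (S (S p))).
  unfold quot; apply (Rmult_le_reg_r (M p * M (S p))); [nra |].
  replace (M (S p) / M p * (M p * M (S p))) with (M (S p) ^ 2) by (field; lra).
  replace (M (S (S p)) / M (S p) * (M p * M (S p))) with (M p * M (S (S p)))
    by (field; lra).
  exact Hlc.
Qed.

Lemma log_quot_ratio_ge_0 p : 0 <= log_quot_ratio M p.
Proof.
  apply ln_ge_0; pose proof (quot_pos p); pose proof (quot_le_quotS p).
  apply (Rmult_le_reg_r (quot M p)); auto.
  unfold Rdiv; rewrite Rmult_assoc, Rinv_l; lra.
Qed.

Lemma Mtilde_eq : Mtilde M = fun p => shift1 M p * (2 + log_quot_ratio M p).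
Proof.
  apply functional_extensionality; intros p.
  unfold Mtilde, shift1, log_quot_ratio; f_equal.
  pose proof (quot_pos p); pose proof (quot_pos (S p)).
  unfold Rdiv; rewrite Rmult_assoc, ln_mult, ln_exp; auto using exp_pos.
  apply Rmult_lt_0_compat; auto using Rinv_0_lt_compat.
Qed.

Lemma log_quot_ratio_Mtilde p :
  log_quot_ratio (Mtilde M) p =
  log_quot_ratio M (S p) + ln (2 + log_quot_ratio M (S (S p)))
  - 2 * ln (2 + log_quot_ratio M (S p)) + ln (2 + log_quot_ratio M p).
Proof.
  assert (Hpos : forall q, 0 < 2 + log_quot_ratio M q)
    by (intros q; pose proof (log_quot_ratio_ge_0 q); lra).
  rewrite Mtilde_eq, log_quot_ratio_mul, (log_quot_ratio_eq (fun q => 2 + _)); auto.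
  - rewrite log_quot_ratio_shift1; ring.
  - intros q; apply M_pos.
Qed.

Lemma log_quot_ratio_Mtilde_le p :
  log_quot_ratio (Mtilde M) p <=
  log_quot_ratio M p + log_quot_ratio M (S p) + log_quot_ratio M (S (S p)) + 2.
Proof.
  rewrite log_quot_ratio_Mtilde.
  pose proof (log_quot_ratio_ge_0 p); pose proof (log_quot_ratio_ge_0 (S p)).
  pose proof (log_quot_ratio_ge_0 (S (S p))).
  pose proof (ln_ge_0 (2 + log_quot_ratio M (S p)) ltac:(lra)).
  pose proof (ln_le_sub_1 (2 + log_quot_ratio M p) ltac:(lra)).
  pose proof (ln_le_sub_1 (2 + log_quot_ratio M (S (S p))) ltac:(lra)).
  lra.
Qed.

Lemma log_quot_ratio_Mtilde_ge p :
  log_quot_ratio M (S p) <= 2 * log_quot_ratio (Mtilde M) p + 4 * ln 4 - 2.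
Proof.
  rewrite log_quot_ratio_Mtilde.
  pose proof (log_quot_ratio_ge_0 p); pose proof (log_quot_ratio_ge_0 (S p)).
  pose proof (log_quot_ratio_ge_0 (S (S p))).
  pose proof (ln_ge_0 (2 + log_quot_ratio M p) ltac:(lra)).
  pose proof (ln_ge_0 (2 + log_quot_ratio M (S (S p))) ltac:(lra)).
  pose proof (ln_le_tangent 4 (2 + log_quot_ratio M (S p)) ltac:(lra) ltac:(lra)).
  lra.
Qed.

Lemma shift1_incl_Mtilde : seq_incl (shift1 M) (Mtilde M).
Proof.
  exists 1, 1; repeat split; try lra.
  intros p; rewrite Mtilde_eq, pow1; unfold shift1.
  pose proof (M_pos (S p)); pose proof (log_quot_ratio_ge_0 p); nra.
Qed.

Lemma Mtilde_incl_shift1_iff : seq_incl (Mtilde M) (shift1 M) <-> sm M.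
Proof.
  rewrite Mtilde_eq, seq_incl_mul_iff, seq_incl_one_iff, sm_geom_bounded.
  2: { intros p; apply M_pos. }
  split; intros Hb.
  - apply (geom_bounded_le _ (fun p => 2 + log_quot_ratio M p)); [intros p; lra | exact Hb].
  - apply (geom_bounded_add _ _ (geom_bounded_const 2) Hb).
Qed.

Lemma sm_Mtilde_iff : sm (Mtilde M) <-> sm M.
Proof.
  rewrite !sm_geom_bounded; split; intros Hb.
  - apply geom_bounded_shift_iff.
    apply (geom_bounded_le _ (fun p => log_quot_ratio (Mtilde M) p
                                       + log_quot_ratio (Mtilde M) p + (4 * ln 4 - 2))).
    + intros p; pose proof (log_quot_ratio_Mtilde_ge p); lra.
    + repeat apply geom_bounded_add; auto using geom_bounded_const.
  - apply (geom_bounded_le _ _ log_quot_ratio_Mtilde_le).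
    pose proof (proj2 (geom_bounded_shift_iff _) Hb) as HbS.
    pose proof (proj2 (geom_bounded_shift_iff _) HbS) as HbSS.
    repeat apply geom_bounded_add; auto using geom_bounded_const.
Qed.

End LogConvex.

Theorem proposition4p14 (M : nat -> R) :
  is_weight_seq M -> log_convex M ->
  seq_incl (shift1 M) (Mtilde M) /\
  ((sm M <-> sm (shift1 M)) /\
   (sm (shift1 M) <-> seq_equiv (shift1 M) (Mtilde M)) /\
   (seq_equiv (shift1 M) (Mtilde M) <-> sm (Mtilde M))).
Proof.
  intros Hw Hlc.
  pose proof (shift1_incl_Mtilde M Hw Hlc) as Hincl.
  pose proof (Mtilde_incl_shift1_iff M Hw) as Hincl_iff.
  pose proof (sm_Mtilde_iff M Hw Hlc) as Hsm_Mtilde.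
  pose proof (sm_shift1_iff M) as Hsm_shift1.
  unfold seq_equiv; tauto.
Qed.
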